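(* Let $S_{r,N}$ be an atomic exponential Puiseux semiring. Then $\rho(S_{r,N})=1$ if $r\in\mathbb{N}$, and $\rho(S_{r,N})=\infty$ if $r\notin\mathbb{N}$.
   Context: A numerical monoid $N$ is an additive submonoid of $\mathbb{N}=\{0,1,2,\dots\}$ with finite complement. The exponential Puiseux semiring $S_{r,N}$ ($r\in\mathbb{Q}_{>0}$) is the additive submonoid of $\mathbb{Q}_{\ge0}$ generated by $\{r^k:k\in N\}$. For an atomic monoid $M$ with sets of lengths $\mathsf{L}(x)$, set $\rho(0)=1$, $\rho(x)=\sup\mathsf{L}(x)/\inf\mathsf{L}(x)$ for $x\neq0$, and the elasticity $\rho(M)=\sup\{\rho(x):x\in M\}$. *)

From HB Require Import structures.
From mathcomp Require Import all_boot all_order all_algebra.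
From mathcomp Require Import all_classical all_reals ereal Rstruct.
Set Implicit Arguments. Unset Strict Implicit. Unset Printing Implicit Defensive.
Import Order.TTheory GRing.Theory Num.Theory.
Local Open Scope classical_set_scope.
Local Open Scope ring_scope.

Definition numerical_monoid (N : set nat) : Prop :=
  N 0%N /\ (forall a b, N a -> N b -> N (a + b)%N) /\
  (exists b : nat, forall n, (b <= n)%N -> N n).

Definition puiseux_exp (r : rat) (N : set nat) : set rat :=
  [set x | exists s : seq nat, (forall k, k \in s -> N k) /\
                               x = \sum_(k <- s) r ^+ k].

(* Atoms of a submonoid M of (Q_{>=0},+) (its only unit is 0). *)
Definition is_atom (M : set rat) (a : rat) : Prop :=
  M a /\ a != 0 /\
  (forall b c, M b -> M c -> a = b + c -> b = 0 \/ c = 0).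

Definition atomic (M : set rat) : Prop :=
  forall x, M x -> x != 0 ->
    exists s : seq rat, (forall a, a \in s -> is_atom M a) /\ x = \sum_(a <- s) a.

Definition lengths (M : set rat) (x : rat) : set nat :=
  [set n | exists s : seq rat, size s = n /\
           (forall a, a \in s -> is_atom M a) /\ x = \sum_(a <- s) a].

Local Open Scope ereal_scope.

Definition elasticity_elt (M : set rat) (x : rat) : \bar Rdefinitions.R :=
  if x == 0%R then 1
  else ereal_sup [set (n%:R)%:E | n in lengths M x] /
       ereal_inf [set (n%:R)%:E | n in lengths M x].

Definition elasticity (M : set rat) : \bar Rdefinitions.R :=
  ereal_sup [set elasticity_elt M x | x in M].

From mathcomp Require Import all_boot all_order all_algebra.
From mathcomp Require Import all_classical all_reals ereal Rstruct.
From mathcomp Require Import zify ring.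
Import Order.TTheory GRing.Theory Num.Theory.
Local Open Scope ring_scope.

(* Every atom of S is a generator r^k (k in N): a nonzero element of S is a
   generator plus an element of S.

   - If r = n is an integer, r^k = n^k is the sum of n^k copies of r^0 = 1,
     so 1 is the only atom, every factorization of x has length x, and all
     elements have elasticity 1.
   - Otherwise write r = p/d with gcd(p,d) = 1 and d > 1.  Clearing
     denominators shows that r^e is never a sum of strictly smaller powers
     of r (d would divide p^e), nor, when p > 1, of strictly larger ones
     (apply the same fact to 1/r = d/p).
     * If p = 1, r^k = d r^(k+1) is not an atom once k is beyond the
       conductor c of N, and r^c cannot be a sum of the remaining atoms
       r^k > r^c: S is not atomic, so this case cannot occur.
     * If p > 1, every generator is an atom, so x = p^k r^c = d^k r^(c+k)
       has factorizations of lengths p^k and d^k.  Their ratio is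
       unbounded in k (a Bernoulli inequality), so rho(S) = +oo. *)

Section PuiseuxMonoid.
Variables (r : rat) (N : set nat).
Local Notation S := (puiseux_exp r N).

Lemma puiseux_ge0 x : 0 < r -> S x -> 0 <= x.
Proof. by move=> r_gt0 [s [_ ->]]; apply: sumr_ge0 => k _; apply/exprn_ge0/ltW. Qed.

Lemma puiseux_gen_muln j m : N j -> S (r ^+ j *+ m).
Proof.
move=> Nj; exists (nseq m j); split; last by rewrite big_nseq iter_addr_0.
by move=> k; rewrite mem_nseq => /andP[_ /eqP ->].
Qed.

Lemma puiseux_gen j : N j -> S (r ^+ j).
Proof. by move=> Nj; have := puiseux_gen_muln j 1 Nj; rewrite mulr1n. Qed.

(* Every atom of S_{r,N} is a generator: a nonzero element of S_{r,N} is its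
   first generator plus the sum of the remaining ones. *)
Lemma atom_is_gen a : 0 < r -> is_atom S a -> exists2 k, N k & a = r ^+ k.
Proof.
move=> r_gt0 [[s [Ns ->]] [nz atom_sum]].
case: s Ns nz atom_sum => [|k s] Ns nz atom_sum; first by rewrite big_nil eqxx in nz.
have Nk : N k by apply: Ns; rewrite inE eqxx.
have S_rest : S (\sum_(j <- s) r ^+ j).
  by exists s; split => // j js; apply: Ns; rewrite inE js orbT.
rewrite big_cons in atom_sum *.
case: (atom_sum _ _ (puiseux_gen k Nk) S_rest erefl) => [/eqP|->].
  by rewrite expf_eq0 (gt_eqF r_gt0) andbF.
by exists k; rewrite ?addr0.
Qed.

End PuiseuxMonoid.

Arguments puiseux_gen_muln {r N j} m.
Arguments puiseux_gen {r N j}.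
Arguments puiseux_ge0 {r N x}.
Arguments atom_is_gen {r N a}.

Section Elasticity.
Local Open Scope classical_set_scope.
Local Open Scope ereal_scope.

Lemma ge_nat_pinfty (x : \bar Rdefinitions.R) : (forall m : nat, (m%:R)%:E <= x) -> x = +oo.
Proof.
case: x => [s| |] // ge_nat; last by have := ge_nat 0%N.
have := ge_nat (Num.Def.archi_bound `|s|%R); rewrite lee_fin => bound_le.
have := lt_le_trans (le_lt_trans (ler_norm s) (archi_boundP (normr_ge0 s))) bound_le.
by rewrite ltxx.
Qed.

Lemma elasticity_elt_set1 (M : set rat) (x : rat) (l : nat) : x != 0%R -> (0 < l)%N ->
  lengths M x = [set l] -> elasticity_elt M x = 1.
Proof.
move=> x_neq0 l_gt0 Lx; rewrite /elasticity_elt (negbTE x_neq0) Lx image_set1.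
by rewrite ereal_sup1 ereal_inf1 divee // eqe pnatr_eq0 -lt0n.
Qed.

Lemma elasticity_eq1 (M : set rat) : M 0%R ->
  (forall x, M x -> elasticity_elt M x = 1) -> elasticity M = 1.
Proof.
move=> M0 elt1; rewrite /elasticity.
have -> : [set elasticity_elt M x | x in M] = [set 1].
  apply/seteqP; split=> [_ [x Mx <-]|_ ->] /=; first exact: elt1.
  by exists 0%R; rewrite ?elt1.
exact: ereal_sup1.
Qed.

(* If x has factorizations of lengths l1 and l2 with m l2 <= l1, then
   rho(x) >= m, since every factorization has length at least 1. *)
Lemma elasticity_elt_ge (M : set rat) (x : rat) (m l1 l2 : nat) : x != 0%R ->
  lengths M x l1 -> lengths M x l2 -> (m * l2 <= l1)%N -> (m%:R)%:E <= elasticity_elt M x.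
Proof.
move=> x_neq0 L1 L2 le_ml; rewrite /elasticity_elt (negbTE x_neq0).
set A := [set (n%:R)%:E | n in lengths M x].
have inf_ge1 : 1 <= ereal_inf A.
  apply/ereal_infP => _ [n [s [<- [_ xs]]] <-]; rewrite lee_fin ler1n lt0n size_eq0.
  by apply: contraNN x_neq0 => /eqP s0; rewrite xs s0 big_nil.
have inf_le : ereal_inf A <= (l2%:R)%:E by apply: ereal_inf_lbound; exists l2.
have sup_ge : (l1%:R)%:E <= ereal_sup A by apply: ereal_sup_ubound; exists l1.
move: inf_ge1 inf_le; case: (ereal_inf A) => [i| |] //; rewrite !lee_fin => i_ge1 i_le.
have i_gt0 : (0 < i)%R by apply: lt_le_trans i_ge1.
rewrite inver (gt_eqF i_gt0) lee_pdivlMr // (le_trans _ sup_ge) // -EFinM lee_fin.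
by rewrite (le_trans (ler_wpM2l (ler0n _ _) i_le)) // -natrM ler_nat.
Qed.

End Elasticity.

(* Integer base: in S_{n,N} the only atom is 1, since a generator n^k > 1
   splits as 1 + (n^k - 1) with both summands multiples of r^0 = 1. *)
Lemma int_atom_eq1 (n : nat) (N : set nat) a : (0 < n)%N -> N 0%N ->
  is_atom (puiseux_exp n%:R N) a -> a = 1.
Proof.
move=> n_gt0 N0 atom_a.
have [k _ ak] : exists2 k, N k & a = n%:R ^+ k by apply: atom_is_gen; rewrite ?ltr0n.
have S_nat j : puiseux_exp n%:R N j%:R by have := @puiseux_gen_muln n%:R N 0%N j N0; rewrite expr0.
move: atom_a => [_ [_ atom_a]]; rewrite ak -natrX in atom_a *.
have : (0 < n ^ k)%N by rewrite expn_gt0 n_gt0.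
case: (n ^ k)%N atom_a => [|[|m]] // atom_a _.
case: (atom_a 1 m.+1%:R (S_nat 1%N) (S_nat m.+1)); first by rewrite -natr1 addrC.
- by move/eqP; rewrite oner_eq0.
- by move/eqP; rewrite pnatr_eq0.
Qed.

Lemma int_factorization_size (n : nat) (N : set nat) (s : seq rat) : (0 < n)%N -> N 0%N ->
  (forall a, a \in s -> is_atom (puiseux_exp n%:R N) a) -> \sum_(a <- s) a = (size s)%:R.
Proof.
move=> n_gt0 N0 atoms_s; rewrite big_seq (eq_bigr (fun=> 1)) -?big_seq.
  by rewrite big_const_seq count_predT iter_addr_0.
by move=> a /atoms_s; apply: int_atom_eq1.
Qed.

Lemma int_elasticity (n : nat) (N : set nat) : (0 < n)%N -> N 0%N ->
  atomic (puiseux_exp n%:R N) -> elasticity (puiseux_exp n%:R N) = 1%E.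
Proof.
move=> n_gt0 N0 atomicS; apply: elasticity_eq1 => [|x Sx]; first by exists [::]; rewrite big_nil.
have [x0|x_neq0] := eqVneq x 0%R; first by rewrite /elasticity_elt x0 eqxx.
have [s0 [atoms_s0 x_s0]] := atomicS x Sx x_neq0.
have x_size := int_factorization_size _ _ _ n_gt0 N0 atoms_s0; rewrite -x_s0 in x_size.
apply: (@elasticity_elt_set1 _ _ (size s0) x_neq0).
  by rewrite lt0n -(eqr_nat rat) -x_size.
apply/seteqP; split => [l [s [<- [atoms_s x_s]]]|_ ->]; last by exists s0.
by apply/eqP; rewrite /= -(eqr_nat rat) -(int_factorization_size n N) // -x_s x_size.
Qed.

Lemma rat_coprime_fraction (r : rat) : 0 < r -> exists p d : nat,
  [/\ (0 < p)%N, (0 < d)%N, coprime p d & r = p%:R / d%:R].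
Proof.
move=> r_gt0; exists `|numq r|%N, `|denq r|%N.
have num_gt0 : 0 < numq r by rewrite numq_gt0.
have den_gt0 := denq_gt0 r.
split; rewrite ?absz_gt0 ?gt_eqF //; first exact: coprime_num_den.
rewrite -{1}(divq_num_den r); congr (_ / _).
  by rewrite -[in LHS](gez0_abs (ltW num_gt0)) pmulrn.
by rewrite -[in LHS](gez0_abs (ltW den_gt0)) pmulrn.
Qed.

(* Bernoulli's inequality (1 + 1/v)^k >= 1 + k/v, cleared of denominators. *)
Lemma bernoulli_nat (v k : nat) : ((v + k) * v ^ k <= v * v.+1 ^ k)%N.
Proof.
elim: k => [|k IH]; first by rewrite !expn0 addn0.
by rewrite !expnS; move: IH; set a := (v ^ k)%N; set b := (v.+1 ^ k)%N => IH; nia.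
Qed.

Lemma power_ratio_unbounded (u v m : nat) : (0 < v)%N -> (v < u)%N ->
  (m * v ^ (m * v) <= u ^ (m * v))%N.
Proof.
move=> v_gt0 lt_vu; set k := (m * v)%N.
have le_pow : (v.+1 ^ k <= u ^ k)%N by case: (k) => // j; rewrite leq_exp2r.
rewrite -(leq_pmul2l v_gt0) mulnA [(v * m)%N]mulnC -/k.
apply: leq_trans (leq_mul (leq_addl v k) (leqnn _)) _.
exact: leq_trans (bernoulli_nat v k) (leq_mul (leqnn v) le_pow).
Qed.

Lemma coprime_neq (p d : nat) : coprime p d -> (1 < d)%N -> p != d.
Proof.
move=> cop_pd d_gt1; apply/eqP => p_eq_d.
by move: cop_pd; rewrite p_eq_d /coprime gcdnn => /eqP d_eq1; rewrite d_eq1 in d_gt1.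
Qed.

Lemma clear_denominators (p d e k : nat) : (k <= e)%N -> (0 < d)%N ->
  (d%:R ^+ e * (p%:R / d%:R) ^+ k : rat) = (p ^ k * d ^ (e - k))%:R.
Proof.
move=> le_ke d_gt0; rewrite natrM !natrX expr_div_n -{1}(subnK le_ke) exprD.
have dk_neq0 : (d%:R : rat) ^+ k != 0 by rewrite expf_neq0 // pnatr_eq0 -lt0n.
by rewrite -mulrA [_ * (_ / _)]mulrCA divff // mulr1 mulrC.
Qed.

(* If gcd(p,d) = 1 and d > 1, then (p/d)^e is not a sum of lower powers of
   p/d: multiplying by d^e, d would divide p^e. *)
Lemma power_not_sum_lower (p d e : nat) (s : seq nat) : coprime p d -> (1 < d)%N ->
  (forall k, k \in s -> k < e)%N ->
  (p%:R / d%:R : rat) ^+ e != \sum_(k <- s) (p%:R / d%:R) ^+ k.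
Proof.
move=> cop_pd d_gt1 s_lt; apply/negP => /eqP E.
have d_gt0 : (0 < d)%N by apply: ltnW.
have /eqP : (p ^ e)%:R = (\sum_(k <- s) p ^ k * d ^ (e - k))%N%:R :> rat.
  have := clear_denominators p _ _ _ (leqnn e) d_gt0; rewrite subnn expn0 muln1 => <-.
  rewrite E mulr_sumr natr_sum; apply: eq_big_seq => k /s_lt /ltnW le_ke.
  exact: clear_denominators.
rewrite eqr_nat => /eqP pe_sum.
have d_dvd : (d %| p ^ e)%N.
  rewrite pe_sum big_seq; apply: dvdn_sum => k /s_lt lt_ke.
  by apply/dvdn_mull/dvdn_exp; rewrite ?subn_gt0.
have : coprime d (p ^ e) by apply: coprimeXr; rewrite coprime_sym.
by rewrite /coprime (gcdn_idPl d_dvd) => /eqP d_eq1; rewrite d_eq1 in d_gt1.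
Qed.

Lemma invert_power (p d K k : nat) : (0 < p)%N -> (0 < d)%N -> (k <= K)%N ->
  ((d%:R / p%:R) ^+ K * (p%:R / d%:R) ^+ k : rat) = (d%:R / p%:R) ^+ (K - k).
Proof.
move=> p_gt0 d_gt0 le_kK; rewrite -{1}(subnK le_kK) exprD -mulrA -exprMn.
have p_neq0 : (p%:R : rat) != 0 by rewrite pnatr_eq0 -lt0n.
have d_neq0 : (d%:R : rat) != 0 by rewrite pnatr_eq0 -lt0n.
have -> : (d%:R / p%:R) * (p%:R / d%:R) = 1 :> rat by field; rewrite p_neq0 d_neq0.
by rewrite expr1n mulr1.
Qed.

Section ReducedFraction.
Variables (p d : nat).
Hypothesis cop_pd : coprime p d.
Hypothesis d_gt1 : (1 < d)%N.
Local Notation r := (p%:R / d%:R : rat).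

Let d_gt0 : (0 < d)%N. Proof. exact: ltnW. Qed.
Let d_neq0 : (d%:R : rat) != 0. Proof. by rewrite pnatr_eq0 -lt0n. Qed.

Hypothesis p_gt1 : (1 < p)%N.
Let r_gt0 : 0 < r. Proof. by rewrite divr_gt0 // ltr0n ltnW. Qed.

(* Dually, for p > 1 the power r^e is not a sum of higher powers of r:
   multiply by (d/p)^K for K large and apply the previous lemma to d/p. *)
Lemma power_not_sum_higher e (s : seq nat) : (forall k, k \in s -> e < k)%N ->
  r ^+ e != \sum_(k <- s) r ^+ k.
Proof.
move=> s_gt; set K := \max_(k <- e :: s) k.
have le_K k : k \in e :: s -> (k <= K)%N.
  by move=> ks; apply: (@leq_bigmax_seq _ _ xpredT id).
have rescale k : k \in e :: s -> (d%:R / p%:R) ^+ K * r ^+ k = (d%:R / p%:R) ^+ (K - k).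
  by move=> /le_K; apply: invert_power => //; apply: ltnW.
have := power_not_sum_lower d p (K - e) [seq (K - k)%N | k <- s].
rewrite coprime_sym big_map => /(_ cop_pd p_gt1) not_sum.
apply: contra (not_sum _) => [/eqP E|j /mapP[k ks ->]]; last first.
  by have := s_gt k ks; have := le_K k; rewrite inE ks orbT => /(_ isT); lia.
rewrite -rescale ?mem_head // E mulr_sumr; apply/eqP/eq_big_seq => k ks.
by rewrite rescale // inE ks orbT.
Qed.

(* Every generator r^n of S_{r,N} is an atom: a splitting r^n = b + c with
   b, c nonzero writes r^n as a sum of powers of r all smaller than r^n,
   hence all of lower degree (if r > 1) or all of higher degree (if r < 1). *)
Lemma gen_is_atom (N : set nat) n : N n -> is_atom (puiseux_exp r N) (r ^+ n).
Proof.
move=> Nn; split; first exact: puiseux_gen.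
split; first by rewrite expf_neq0 // gt_eqF.
move=> _ _ [s1 [_ ->]] [s2 [_ ->]] E.
set B := \sum_(k <- s1) r ^+ k in E *; set C := \sum_(k <- s2) r ^+ k in E *.
have [|B_neq0] := eqVneq B 0; first by left.
have [|C_neq0] := eqVneq C 0; first by right.
exfalso.
have term_le (s : seq nat) k : k \in s -> r ^+ k <= \sum_(j <- s) r ^+ j.
  move=> ks; rewrite (perm_big _ (perm_to_rem ks)) big_cons lerDl.
  by apply: sumr_ge0 => j _; apply/exprn_ge0/ltW.
have B_gt0 : 0 < B by rewrite lt0r B_neq0 sumr_ge0 // => k _; apply/exprn_ge0/ltW.
have C_gt0 : 0 < C by rewrite lt0r C_neq0 sumr_ge0 // => k _; apply/exprn_ge0/ltW.
have terms_lt k : k \in s1 ++ s2 -> r ^+ k < r ^+ n.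
  rewrite mem_cat E => /orP[/term_le|/term_le] le_k; apply: le_lt_trans le_k _.
    by rewrite ltrDl.
  by rewrite ltrDr.
have rn_sum : r ^+ n = \sum_(k <- s1 ++ s2) r ^+ k by rewrite big_cat.
have r_neq1 : r != 1.
  apply: contra (coprime_neq p d cop_pd d_gt1) => /eqP.
  by move/(congr1 ( *%R^~ d%:R)); rewrite mulfVK // mul1r => /eqP; rewrite eqr_nat.
case: (ltgtP r 1) r_neq1 => // [r_lt1|r_gt1] _.
- have s_gt k : k \in s1 ++ s2 -> (n < k)%N by move/terms_lt; rewrite ltr_iXn2l.
  by have := power_not_sum_higher _ _ s_gt; rewrite -rn_sum eqxx.
- have s_lt k : k \in s1 ++ s2 -> (k < n)%N by move/terms_lt; rewrite ltr_eXn2l.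
  by have := power_not_sum_lower p d n _ cop_pd d_gt1 s_lt; rewrite -rn_sum eqxx.
Qed.

(* The non-integral case of the theorem: x = p^k r^c = d^k r^(c+k) has
   factorizations into atoms of lengths p^k and d^k, whose ratio is unbounded. *)
Lemma nonint_elasticity (N : set nat) c : (forall n, (c <= n)%N -> N n) ->
  elasticity (puiseux_exp r N) = +oo%E.
Proof.
move=> N_ge_c; apply: ge_nat_pinfty => m; set S := puiseux_exp r N.
set k := (m * minn p d)%N; set x := r ^+ c *+ (p ^ k).
have x_eq : x = r ^+ (c + k) *+ (d ^ k).
  have rk : r ^+ k *+ (d ^ k) = (p ^ k)%:R.
    by rewrite expr_div_n -mulr_natr !natrX mulfVK // expf_neq0.
  by rewrite /x exprD -mulrnAr rk mulr_natr.
have x_neq0 : x != 0.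
  have pk_gt0 : (0 < p ^ k)%N by rewrite expn_gt0 ltnW.
  by rewrite mulrn_eq0 negb_or expf_neq0 ?gt_eqF // -lt0n; exact: pk_gt0.
have lengths_pow j l : (c <= j)%N -> x = r ^+ j *+ l -> lengths S x l.
  move=> le_cj ->; exists (nseq l (r ^+ j)); rewrite size_nseq big_nseq iter_addr_0.
  split=> //; split=> // a; rewrite mem_nseq => /andP[_ /eqP ->].
  exact/gen_is_atom/N_ge_c.
have Lp := lengths_pow c (p ^ k)%N (leqnn c) erefl.
have Ld := lengths_pow (c + k)%N (d ^ k)%N (leq_addr k c) x_eq.
have elt_ge : ((m%:R)%:E <= elasticity_elt S x)%E.
  case: (ltngtP p d) (coprime_neq p d cop_pd d_gt1) => [lt_pd _|lt_dp _|] //.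
    apply: elasticity_elt_ge x_neq0 Ld Lp _.
    by rewrite /k (minn_idPl (ltnW lt_pd)) power_ratio_unbounded // ltnW.
  apply: elasticity_elt_ge x_neq0 Lp Ld _.
  by rewrite /k (minn_idPr (ltnW lt_dp)) power_ratio_unbounded // ltnW.
apply: le_trans elt_ge _; apply: ereal_sup_ubound; exists x => //.
exact/puiseux_gen_muln/N_ge_c.
Qed.

End ReducedFraction.

(* For r = 1/d with d > 1 the semiring S_{r,N} is not atomic: beyond the
   conductor c of N, r^k = d r^(k+1) is not an atom, while r^c is smaller
   than all the remaining atoms r^k, k < c. *)
Lemma unit_fraction_not_atomic (d c : nat) (N : set nat) : (1 < d)%N ->
  (forall n, (c <= n)%N -> N n) -> ~ atomic (puiseux_exp (1%:R / d%:R) N).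
Proof.
move=> d_gt1 N_ge_c atomicS; set r : rat := 1%:R / d%:R.
have d_neq0 : (d%:R : rat) != 0 by rewrite pnatr_eq0 -lt0n ltnW.
have r_gt0 : 0 < r by rewrite divr_gt0 // ltr0n ltnW.
have r_lt1 : r < 1 by rewrite ltr_pdivrMr ?mul1r ?ltr0n ?ltr1n // ltnW.
have not_atom k : (c <= k)%N -> ~ is_atom (puiseux_exp r N) (r ^+ k).
  move=> le_ck [_ [_ atom_k]].
  have Nk1 : N k.+1 by apply: N_ge_c; apply: leqW.
  have split_k : r ^+ k = r ^+ k.+1 *+ 1 + r ^+ k.+1 *+ d.-1.
    have rd : r *+ d = 1 by rewrite -mulr_natr mulfVK.
    rewrite -mulrnDr add1n prednK; last exact: ltnW.
    by rewrite exprSr -mulrnAr rd mulr1.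
  have pos m : (0 < m)%N -> r ^+ k.+1 *+ m != 0.
    by move=> m_gt0; rewrite mulrn_eq0 negb_or -lt0n m_gt0 expf_neq0 // gt_eqF.
  have pd_gt0 : (0 < d.-1)%N by rewrite -subn1 subn_gt0.
  case: (atom_k _ _ (puiseux_gen_muln 1 Nk1) (puiseux_gen_muln d.-1 Nk1) split_k) => /eqP.
    by rewrite (negbTE (pos 1%N isT)).
  by rewrite (negbTE (pos _ pd_gt0)).
have rc_neq0 : r ^+ c != 0 by rewrite expf_neq0 // gt_eqF.
have [[|a s] [atoms_s rc_sum]] := atomicS _ (puiseux_gen (N_ge_c c (leqnn c))) rc_neq0.
  by rewrite rc_sum big_nil eqxx in rc_neq0.
have [k Nk ak] := atom_is_gen r_gt0 (atoms_s a (mem_head a s)).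
have lt_kc : (k < c)%N.
  by rewrite ltnNge; apply/negP => /not_atom; rewrite -ak; apply; apply: atoms_s; apply: mem_head.
have rest_ge0 : 0 <= \sum_(b <- s) b.
  rewrite big_seq sumr_ge0 // => b bs.
  have [Sb _] : is_atom (puiseux_exp r N) b by apply: atoms_s; rewrite inE bs orbT.
  exact: puiseux_ge0 r_gt0 Sb.
have : r ^+ c < a by rewrite ak ltr_iXn2l.
by rewrite rc_sum big_cons ltNge lerDl rest_ge0.
Qed.

Local Open Scope ereal_scope.

Theorem mainTheorem6 (r : rat) (N : set nat) :
  (0 < r)%R -> numerical_monoid N -> atomic (puiseux_exp r N) ->
  ((exists n : nat, r = n%:R) -> elasticity (puiseux_exp r N) = 1) /\
  (~ (exists n : nat, r = n%:R) -> elasticity (puiseux_exp r N) = +oo).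
Proof.
move=> r_gt0 [N0 [_ [c N_ge_c]]] atomicS; split.
  by move=> [n r_n]; rewrite r_n ltr0n in r_gt0; rewrite r_n in atomicS *; exact: int_elasticity.
move=> r_nonint; have [p [d [p_gt0 d_gt0 cop_pd r_pd]]] := rat_coprime_fraction r r_gt0.
rewrite r_pd in atomicS *.
have d_gt1 : (1 < d)%N.
  rewrite ltn_neqAle d_gt0 andbT; apply/negP => /eqP d_eq1.
  by apply: r_nonint; exists p; rewrite r_pd -d_eq1 divr1.
have [p_eq1|p_neq1] := eqVneq p 1%N.
  by rewrite p_eq1 in atomicS; case: (unit_fraction_not_atomic d c N d_gt1 N_ge_c atomicS).
have p_gt1 : (1 < p)%N by rewrite ltn_neqAle eq_sym p_neq1 p_gt0.
exact: nonint_elasticity p d cop_pd d_gt1 p_gt1 N c N_ge_c.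
Qed.
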